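(* Let $n,m\ge1$ and consider the $n\times m$ grid communication graph with a direction assignment $g$ such that adjacent circles have opposite directions. Then there are exactly $\gcd(n,m)$ rings, all of them have the same length, and all of them have the same number of hitting points on each of the four walls (i.e., for each wall, every ring hits that wall the same number of times).
   Context: Grid. The $n\times m$ grid communication graph consists of $nm$ pairwise disjoint unit circles, circle $(i,j)$ in row $i$ (rows horizontal, row 1 on top) and column $j$ (columns vertical, column 1 on the left), centres on a square lattice, circle $(i,j)$ adjacent exactly to the existing circles $(i\pm1,j)$, $(i,j\pm1)$. For adjacent circles $C_i,C_j$, the link position $\phi_{ij}$ is the point of $C_i$ closest to $C_j$. A direction assignment gives each circle $C$ a direction $g(C)\in\{1,-1\}$ (counterclockwise/clockwise), with $g(C_i)=-g(C_j)$ for adjacent circles. Rings. Trace a point moving along a circle $C_i$ in direction $g(C_i)$ at constant speed; whenever it reaches a link position $\phi_{ij}$ of its current circle, it passes to $C_j$ at $\phi_{ji}$ and continues along $C_j$ in direction $g(C_j)$ (this is the motion of a robot that never meets any other robot). This motion is periodic and the closed curve it traces is a ring. Every arc of a circle between consecutive link positions belongs to exactly one ring, so the circles decompose into rings overlapping only at link positions. The length of a ring is the total length of the circle arcs forming it. Walls. A ring hits the top wall (at a circle of row 1) each time it passes through the topmost point of a circle of row 1; similarly for the bottom wall (bottommost points of circles of row $n$), the left wall (leftmost points of circles of column 1) and the right wall (rightmost points of circles of column $m$). The number of hitting points of a ring on a wall is the number of such points on the ring. *)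

From mathcomp Require Import all_boot.
From Stdlib Require Import Rdefinitions Raxioms RIneq Rtrigo1.
Set Implicit Arguments. Unset Strict Implicit. Unset Printing Implicit Defensive.

(* Circles of the n x m grid: (i, j) with i : 'I_n the row (0 = top row,
   i.e. row 1 of the paper) and j : 'I_m the column (0 = leftmost column).
   Cardinal points of a unit circle: p : 'I_4 stands for the point at angle
   p * pi/2, i.e. 0 = rightmost (east), 1 = topmost (north),
   2 = leftmost (west), 3 = bottommost (south).
   Quarter arc q : 'I_4 of a circle is the arc between angles q*pi/2 and
   (q+1)*pi/2.  Every link position is a cardinal point, so the arcs between
   consecutive link positions are unions of quarter arcs. *)

Definition circle (n m : nat) := ('I_n * 'I_m)%type.

(* A state = a quarter arc of a circle, traversed in the circle's direction. *)
Definition state (n m : nat) := (circle n m * 'I_4)%type.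

Definition nbr (n m : nat) (c : circle n m) (p : 'I_4) : option (circle n m) :=
  match val p with
  | 0 => omap (fun j' : 'I_m => (c.1, j')) (insub (val c.2).+1)
  | 1 => if val c.1 is i'.+1 then omap (fun i'' : 'I_n => (i'', c.2)) (insub i') else None
  | 2 => if val c.2 is j'.+1 then omap (fun j'' : 'I_m => (c.1, j'')) (insub j') else None
  | _ => omap (fun i' : 'I_n => (i', c.2)) (insub (val c.1).+1)
  end.

Definition adjacent (n m : nat) (c c' : circle n m) : Prop :=
  exists p, nbr c p = Some c'.

(* Direction assignment: g c = true means counterclockwise (g(C) = 1),
   false means clockwise (g(C) = -1). *)
Definition proper_direction (n m : nat) (g : circle n m -> bool) : Prop :=
  forall c c', adjacent c c' -> g c <> g c'.

Definition end_pt (n m : nat) (g : circle n m -> bool) (s : state n m) : 'I_4 :=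
  if g s.1 then inord ((val s.2).+1 %% 4) else s.2.

Definition start_quarter (n m : nat) (g : circle n m -> bool) (c : circle n m)
  (p : 'I_4) : 'I_4 :=
  if g c then p else inord ((val p + 3) %% 4).

(* The motion of a robot meeting no other robot, one quarter arc at a time:
   at the end point p, if p is a link position (a neighbour exists in that
   direction) pass to the neighbour at the opposite point, otherwise stay. *)
Definition robot_step (n m : nat) (g : circle n m -> bool) (s : state n m) : state n m :=
  let p := end_pt g s in
  match nbr s.1 p with
  | Some c' => (c', start_quarter g c' (inord ((val p + 2) %% 4)))
  | None => (s.1, start_quarter g s.1 p)
  end.

(* The ring through a state: the (quarter arcs of the) periodic orbit. *)
Definition ring_of (n m : nat) (g : circle n m -> bool) (s : state n m)
  : {set state n m} :=
  [set t | fconnect (robot_step g) s t].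

Definition rings (n m : nat) (g : circle n m -> bool) : {set {set state n m}} :=
  [set ring_of g s | s : state n m].

(* Length of a ring: total length of its arcs; each quarter arc of a unit
   circle has length pi/2. *)
Definition ring_length (n m : nat) (r : {set state n m}) : R :=
  Rmult (INR #|r|) (Rdiv PI (IZR 2)).

Inductive wall := Top | Bottom | LeftW | RightW.

Definition ends_on_wall (n m : nat) (g : circle n m -> bool) (w : wall)
  (s : state n m) : bool :=
  let p := val (end_pt g s) in
  match w with
  | Top => (p == 1) && (val s.1.1 == 0)
  | Bottom => (p == 3) && (val s.1.1 == n.-1)
  | LeftW => (p == 2) && (val s.1.2 == 0)
  | RightW => (p == 0) && (val s.1.2 == m.-1)
  end.

Definition hits (n m : nat) (g : circle n m -> bool) (w : wall)
  (r : {set state n m}) : nat :=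
  #|[set s in r | ends_on_wall g w s]|.

(* A robot moving along a quarter arc advances by half a column horizontally
   and half a row vertically.  Unfold its horizontal position onto a cycle of
   4m half-columns (rightwards through the columns, then back leftwards) and
   its vertical position onto a cycle of 4n half-rows: passing a link keeps
   the horizontal and vertical sense of travel, because adjacent circles turn
   in opposite directions, and turning back at a wall point is exactly the
   wrap-around of the unfolded cycle.  Hence one step of the motion is the
   translation (x, y) |-> (x + 1, y + 1) of Z/4m x Z/4n, read through an
   injective encoding of the quarter arcs.  Every ring therefore consists of
   lcm(4m, 4n) quarter arcs, so the 4nm quarter arcs form gcd(n, m) rings, and
   a ring hits a wall once per period of the coordinate that detects that
   wall. *)

From mathcomp Require Import all_boot zify.
From Stdlib Require Import Rdefinitions.
Set Implicit Arguments. Unset Strict Implicit. Unset Printing Implicit Defensive.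

Lemma iter_eq_dvdn_order (T : finType) (f : T -> T) : injective f ->
  forall x k, (iter k f x == x) = (order f x %| k).
Proof.
move=> injf x k; set o := order f x.
have iter_muln_order q : iter (q * o) f x = x.
  by rewrite iterM; apply: iter_fix; apply: iter_order.
have lt_ko : k %% o < o by rewrite ltn_pmod ?order_gt0.
rewrite {1}(divn_eq k o) addnC iterD iter_muln_order /dvdn.
apply/eqP/eqP => [fix_x | ->] //.
by rewrite -(findex_iter lt_ko) fix_x /findex /orbit -orderSpred /= eqxx.
Qed.

Lemma traject_mkseq (T : Type) (f : T -> T) x n :
  traject f x n = mkseq (fun k => iter k f x) n.
Proof.
apply: (@eq_from_nth _ x); rewrite ?size_traject ?size_mkseq // => i lt_in.
by rewrite nth_traject // nth_mkseq.
Qed.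

Lemma eqn_modDr_id a x k : x < a -> ((x + k) %% a == x) = (a %| k).
Proof.
by move=> lt_xa; rewrite -{2}(modn_small lt_xa) -[X in _ == X %% _]addn0 eqn_modDl mod0n.
Qed.

Lemma count_modn_iota q c z : c < q ->
  count (fun k => (z + k) %% q == c) (iota 0 q) = 1.
Proof.
move=> lt_cq; elim: z => [|z IHz].
  rewrite (@eq_in_count _ _ (pred1 c)).
    by rewrite (count_uniq_mem _ (iota_uniq 0 q)) mem_iota add0n lt_cq.
  by move=> k; rewrite mem_iota add0n /= => lt_kq; rewrite modn_small.
case: q lt_cq IHz => [//|q] lt_cq IHz.
have iota_rcons : iota 0 q.+1 = iota 0 q ++ [:: q] by rewrite -addn1 iotaD.
have iota_cons : iota 0 q.+1 = 0 :: [seq 1 + i | i <- iota 0 q] by rewrite -iotaDl.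
rewrite -[RHS]IHz [in LHS]iota_rcons [in RHS]iota_cons count_cat /= count_map addn0 addnC.
congr (_ + _); first by rewrite addSn -addnS modnDr addn0.
by apply: eq_count => k /=; rewrite add1n addnS addSn.
Qed.

Lemma count_modn_iota_muln q c z a : c < q ->
  count (fun k => (z + k) %% q == c) (iota 0 (a * q)) = a.
Proof.
move=> lt_cq; elim: a => [|a IHa] //.
have iota_block : iota (0 + a * q) q = [seq a * q + i | i <- iota 0 q].
  by rewrite add0n -iotaDl addn0.
rewrite mulSnr iotaD count_cat IHa iota_block count_map.
rewrite -addn1 -(count_modn_iota (z + a * q) lt_cq).
by congr (_ + _); apply: eq_count => k /=; rewrite addnA.
Qed.

Definition cyc_succ (a x : nat) : nat := if x.+1 == a then 0 else x.+1.

Lemma cyc_succ_modn a z : 0 < a -> cyc_succ a (z %% a) = z.+1 %% a.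
Proof.
move=> a_gt0; rewrite -addn1 -modnDml addn1 /cyc_succ.
move: (z %% a) (ltn_pmod z a_gt0) => x lt_xa.
case: eqP => [->|/eqP ne_xa]; first by rewrite modnn.
by rewrite modn_small //; lia.
Qed.

Lemma cyc_succ_inj a x y : x < a -> y < a -> cyc_succ a x = cyc_succ a y -> x = y.
Proof. by rewrite /cyc_succ; case: eqP; case: eqP; lia. Qed.

Lemma nbr_Some n m (c c' : circle n m) (p : 'I_4) : nbr c p = Some c' ->
  match val p with
  | 0 => val c'.1 = val c.1 /\ val c'.2 = (val c.2).+1
  | 1 => (val c'.1).+1 = val c.1 /\ val c'.2 = val c.2
  | 2 => val c'.1 = val c.1 /\ (val c'.2).+1 = val c.2
  | _ => val c'.1 = (val c.1).+1 /\ val c'.2 = val c.2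
  end.
Proof.
case: c => [[i lt_in] [j lt_jm]]; case: p => [[|[|[|[|p]]]] lt_p4] //=; rewrite /nbr /=.
- by case: (insubP 'I_m) => [k _ val_k|] //= [<-].
- by case: i lt_in => [|i] //= _; case: (insubP 'I_n) => [k _ val_k|] //= [<-] /=; rewrite val_k.
- by case: j lt_jm => [|j] //= _; case: (insubP 'I_m) => [k _ val_k|] //= [<-] /=; rewrite val_k.
- by case: (insubP 'I_n) => [k _ val_k|] //= [<-].
Qed.

Lemma nbr_None n m (c : circle n m) (p : 'I_4) : nbr c p = None ->
  match val p with
  | 0 => (val c.2).+1 = m
  | 1 => val c.1 = 0
  | 2 => val c.2 = 0
  | _ => (val c.1).+1 = n
  end.
Proof.
case: c => [[i lt_in] [j lt_jm]]; case: p => [[|[|[|[|p]]]] lt_p4] //=; rewrite /nbr /=.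
- by case: (insubP 'I_m) => [//|]; rewrite -leqNgt; lia.
- by case: i lt_in => [|i] //= lt_in; case: (insubP 'I_n) => [//|]; rewrite -leqNgt; lia.
- by case: j lt_jm => [|j] //= lt_jm; case: (insubP 'I_m) => [//|]; rewrite -leqNgt; lia.
- by case: (insubP 'I_n) => [//|]; rewrite -leqNgt; lia.
Qed.

(* Position of quarter arc q of a circle in column j (resp. row i) on the
   unfolded cycle: the two halves of column j sit at 2j, 2j+1 when crossed
   rightwards and at 4m-2j-2, 4m-2j-1 when crossed leftwards; rows likewise,
   downwards first. *)
Definition unfold_x (m : nat) (ccw : bool) (q j : nat) : nat :=
  match ccw, q with
  | true, 0 => 4 * m - (2 * j + 2) | true, 1 => 4 * m - (2 * j + 1)
  | true, 2 => 2 * j | true, _ => 2 * j + 1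
  | false, 0 => 2 * j + 1 | false, 1 => 2 * j
  | false, 2 => 4 * m - (2 * j + 1) | false, _ => 4 * m - (2 * j + 2)
  end.

Definition unfold_y (n : nat) (ccw : bool) (q i : nat) : nat :=
  match ccw, q with
  | true, 0 => 4 * n - (2 * i + 1) | true, 1 => 2 * i
  | true, 2 => 2 * i + 1 | true, _ => 4 * n - (2 * i + 2)
  | false, 0 => 2 * i | false, 1 => 4 * n - (2 * i + 1)
  | false, 2 => 4 * n - (2 * i + 2) | false, _ => 2 * i + 1
  end.

Section Unfolding.

Variables (n m : nat) (g : circle n m -> bool).

Definition unfold (s : state n m) : nat * nat :=
  (unfold_x m (g s.1) (val s.2) (val s.1.2), unfold_y n (g s.1) (val s.2) (val s.1.1)).

Lemma unfold_bounded s : (unfold s).1 < 4 * m /\ (unfold s).2 < 4 * n.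
Proof.
case: s => [[[i lt_in] [j lt_jm]] [[|[|[|[|q]]]] lt_q4]] //;
by rewrite /unfold /=; case: (g _) => /=; lia.
Qed.

Lemma unfold_inj : injective unfold.
Proof.
move=> [[[i lt_in] [j lt_jm]] [q lt_q4]] [[[i' lt_i'n] [j' lt_j'm]] [q' lt_q'4]].
rewrite /unfold /=; case ccw: (g _); case ccw': (g _);
move: lt_q4 lt_q'4; case: q => [|[|[|[|q]]]] //; case: q' => [|[|[|[|q']]]] //=
  lt_q4 lt_q'4 [eq_x eq_y];
first [lia | (have ? : i = i' by lia); (have ? : j = j' by lia); subst i' j';
  rewrite (bool_irrelevance lt_i'n lt_in) (bool_irrelevance lt_j'm lt_jm) ?ccw in ccw' *;
  first [by rewrite (bool_irrelevance lt_q'4 lt_q4) | by []]].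
Qed.

Definition wall_period (w : wall) : nat :=
  match w with Top | Bottom => 4 * n | LeftW | RightW => 4 * m end.

Definition wall_coord (w : wall) (e : nat * nat) : nat :=
  match w with Top | Bottom => e.2 | LeftW | RightW => e.1 end.

Definition wall_value (w : wall) : nat :=
  match w with
  | Top => 4 * n - 1 | Bottom => 2 * n - 1 | LeftW => 4 * m - 1 | RightW => 2 * m - 1
  end.

Lemma wall_value_lt w : 0 < n -> 0 < m -> wall_value w < wall_period w.
Proof. by case: w => /=; lia. Qed.

Lemma ends_on_wall_unfold w s :
  ends_on_wall g w s = (wall_coord w (unfold s) == wall_value w).
Proof.
case: s => [[[i lt_in] [j lt_jm]] [[|[|[|[|q]]]] lt_q4]] //;
rewrite /ends_on_wall /end_pt /unfold /=;
by case: (g _) => /=; rewrite ?inordK //=; case: w => /=; apply/idP/idP; lia.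
Qed.

Hypothesis hg : proper_direction g.

Lemma proper_direction_nbr c p c' : nbr c p = Some c' -> g c' = ~~ g c.
Proof. by move=> nbr_c; have := hg (ex_intro _ p nbr_c); case: (g c); case: (g c'). Qed.

Lemma unfold_step s :
  unfold (robot_step g s) = (cyc_succ (4 * m) (unfold s).1, cyc_succ (4 * n) (unfold s).2).
Proof.
case: s => [[[i lt_in] [j lt_jm]] [[|[|[|[|q]]]] lt_q4]] //; rewrite /robot_step /end_pt /=;
case ccw: (g _) => /=; rewrite ?inordK //;
(case nbr_c: (nbr _ _) => [c'|];
 [ have := nbr_Some nbr_c; have ccw' := proper_direction_nbr nbr_c; rewrite ccw /= in ccw';
   rewrite /unfold /start_quarter ccw' /=
 | have := nbr_None nbr_c; rewrite /unfold /start_quarter ccw /= ]).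
all: rewrite ?inordK //= ?ccw /cyc_succ /=.
all: move=> nbr_coords; congr pair; case: eqP; lia.
Qed.

Lemma unfold_iter s k :
  unfold (iter k (robot_step g) s) = (((unfold s).1 + k) %% (4 * m), ((unfold s).2 + k) %% (4 * n)).
Proof.
have [lt_x lt_y] := unfold_bounded s.
have m4_gt0 : 0 < 4 * m := leq_trans (ltn0Sn _) lt_x.
have n4_gt0 : 0 < 4 * n := leq_trans (ltn0Sn _) lt_y.
elim: k => [|k IHk]; first by rewrite !addn0 !modn_small.
by rewrite iterS unfold_step IHk /= !cyc_succ_modn ?addnS.
Qed.

Lemma robot_step_inj : injective (robot_step g).
Proof.
move=> s t eq_st; apply: unfold_inj; have := congr1 unfold eq_st; rewrite !unfold_step.
have [lt_xs lt_ys] := unfold_bounded s; have [lt_xt lt_yt] := unfold_bounded t.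
case: (unfold s) (unfold t) lt_xs lt_ys lt_xt lt_yt => [xs ys] [xt yt] /= lt_xs lt_ys lt_xt lt_yt.
by case=> /cyc_succ_inj-> // /cyc_succ_inj->.
Qed.

Local Notation period := (lcmn (4 * m) (4 * n)).

Lemma iter_robot_step_id s k : (iter k (robot_step g) s == s) = (period %| k).
Proof.
have [lt_x lt_y] := unfold_bounded s.
rewrite dvdn_lcm -(eqn_modDr_id _ lt_x) -(eqn_modDr_id _ lt_y) -xpair_eqE -unfold_iter.
by rewrite (inj_eq unfold_inj).
Qed.

Lemma order_robot_step s : order (robot_step g) s = period.
Proof.
apply/eqP; rewrite eqn_dvd -(iter_eq_dvdn_order robot_step_inj) -(iter_robot_step_id s).
by rewrite iter_order ?iter_robot_step_id ?eqxx ?dvdnn //; exact: robot_step_inj.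
Qed.

Lemma card_ring_of s : #|ring_of g s| = period.
Proof. by rewrite -(order_robot_step s); apply: eq_card => t; rewrite inE. Qed.

Lemma wall_coord_unfold_iter w s k :
  wall_coord w (unfold (iter k (robot_step g) s)) = (wall_coord w (unfold s) + k) %% wall_period w.
Proof. by rewrite unfold_iter; case: w. Qed.

Lemma wall_period_dvdn w : wall_period w %| period.
Proof. by case: w; rewrite /= ?dvdn_lcml ?dvdn_lcmr. Qed.

Lemma hits_ring_of w s : hits g w (ring_of g s) = period %/ wall_period w.
Proof.
have [lt_x lt_y] := unfold_bounded s.
have hits_orbit : hits g w (ring_of g s) = count (ends_on_wall g w) (orbit (robot_step g) s).
  rewrite /hits -size_filter -(card_uniqP (filter_uniq _ (orbit_uniq _ _))).
  by apply: eq_card => t; rewrite !inE mem_filter -fconnect_orbit andbC.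
rewrite hits_orbit /orbit order_robot_step traject_mkseq /mkseq count_map.
under eq_count => k do rewrite /= ends_on_wall_unfold wall_coord_unfold_iter.
by rewrite -{1}(divnK (wall_period_dvdn w)) count_modn_iota_muln // wall_value_lt //; lia.
Qed.

Lemma partition_rings : partition (rings g) [set: state n m].
Proof.
have -> : rings g = equivalence_partition (fconnect (robot_step g)) [set: state n m].
  apply/setP => A; apply/imsetP/imsetP => -[s _ ->]; exists s => //;
  by apply/setP => t; rewrite !inE.
apply: equivalence_partitionP => x y z _ _ _; split; first exact: connect0.
move=> xy; apply/idP/idP; last exact: connect_trans.
by apply: connect_trans; rewrite (fconnect_sym robot_step_inj).
Qed.

End Unfolding.

Unset Implicit Arguments.

Theorem theorem5 (n m : nat) (hn : 0 < n) (hm : 0 < m)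
  (g : circle n m -> bool) (hg : proper_direction g) :
  #|rings g| = gcdn n m /\
  (forall r1 r2, r1 \in rings g -> r2 \in rings g ->
     ring_length r1 = ring_length r2 /\
     (forall w : wall, hits g w r1 = hits g w r2)).
Proof.
have card_rings r : r \in rings g -> #|r| = lcmn (4 * m) (4 * n).
  by case/imsetP=> s _ ->; exact: card_ring_of.
split=> [|r1 r2 /imsetP[s1 _ ->] /imsetP[s2 _ ->]].
- have := card_uniform_partition card_rings (partition_rings hg).
  rewrite cardsT !card_prod !card_ord -muln_lcmr lcmnC.
  have := muln_lcm_gcd n m; have : 0 < lcmn n m by rewrite lcmn_gt0 hn hm.
  by nia.
- by rewrite /ring_length !card_ring_of //; split=> // w; rewrite !hits_ring_of.
Qed.
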